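(* For any $d_y,M\in\mathbb{N}$ and any $\delta>0$, there exists a $\textsc{ReLU}$ network $f:\mathbb R\rightarrow\mathbb R^{d_y}$ of width $d_y$ such that $f(c)=\mathtt{decode}_M(c)$ for all $c\in\mathcal C_{d_yM}$. Furthermore, $f(\mathbb R)\subset[0,1]^{d_y}$.
   Context: For $n\in\mathbb N$, $\mathcal C_n:=\{0,2^{-n},2\cdot2^{-n},\dots,1-2^{-n}\}$ and $q_n:[0,1]\to\mathcal C_n$, $q_n(x)=\max\{c\in\mathcal C_n:c\le x\}$. For $y\in[0,1]^{d_y}$, $\mathtt{encode}_M(y):=\sum_{i=1}^{d_y}q_M(y_i)\,2^{-(i-1)M}\in\mathcal C_{d_yM}$. $\mathtt{decode}_M:\mathcal C_{d_yM}\to\mathcal C_M^{d_y}$ maps $c$ to the unique $\hat y\in\mathcal C_M^{d_y}$ with $\mathtt{encode}_M(\hat y)=c$ (i.e., $\sum_{i=1}^{d_y}\hat y_i 2^{-(i-1)M}=c$). A $\textsc{ReLU}$ network is $t_L\circ\sigma_{L-1}\circ\cdots\circ\sigma_1\circ t_1$ with affine $t_\ell:\mathbb R^{d_{\ell-1}}\to\mathbb R^{d_\ell}$ and coordinatewise $\textsc{ReLU}$ $\sigma_\ell$; its width is $\max\{d_1,\dots,d_{L-1}\}$. *)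

From mathcomp Require Import all_boot all_order all_algebra.
From mathcomp Require Import boolp classical_sets reals.
Set Implicit Arguments. Unset Strict Implicit. Unset Printing Implicit Defensive.
Import Order.TTheory GRing.Theory Num.Theory.
Local Open Scope ring_scope.
Local Open Scope classical_set_scope.

Definition Cn {R : realType} (n : nat) : set R :=
  [set x | exists k : nat, (k < 2 ^ n)%N /\ x = k%:R / 2 ^+ n].

Definition in_Cvec {R : realType} (dy M : nat) (y : 'rV[R]_dy) : Prop :=
  forall i : 'I_dy, Cn M (y 0 i).

(* sum_{i=1}^{d_y} y_i 2^{-(i-1)M}, indices shifted to 0-based *)
Definition encode_sum {R : realType} (dy M : nat) (y : 'rV[R]_dy) : R :=
  \sum_(i < dy) y 0 i / 2 ^+ (i * M).

Definition decode {R : realType} (dy M : nat) (c : R) : 'rV[R]_dy :=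
  xget 0 [set y | in_Cvec M y /\ encode_sum M y = c].

Definition relu_vec {R : realType} (n : nat) (x : 'rV[R]_n) : 'rV[R]_n :=
  map_mx (fun v => Num.max v 0) x.

(* relu_net din dout hs f : f is the ReLU network t_L o s_{L-1} o ... o s_1 o t_1
   whose hidden layer dimensions are hs = [d_1; ...; d_{L-1}]. *)
Inductive relu_net (R : realType) (din : nat) :
    forall (dout : nat), seq nat -> ('rV[R]_din -> 'rV[R]_dout) -> Prop :=
  | relu_net_affine (dout : nat) (A : 'M[R]_(din, dout)) (b : 'rV[R]_dout) :
      @relu_net R din dout [::] (fun x => x *m A + b)
  | relu_net_layer (k dout : nat) (hs : seq nat) (g : 'rV[R]_din -> 'rV[R]_k)
      (A : 'M[R]_(k, dout)) (b : 'rV[R]_dout) :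
      @relu_net R din k hs g ->
      @relu_net R din dout (rcons hs k) (fun x => relu_vec (g x) *m A + b).

Definition width (hs : seq nat) : nat := \max_(h <- hs) h.

Arguments relu_net {R} din dout hs f.

From mathcomp Require Import all_boot all_order all_algebra.
From mathcomp Require Import boolp classical_sets reals.
From mathcomp Require Import ring lra zify.
Set Implicit Arguments. Unset Strict Implicit. Unset Printing Implicit Defensive.
Import Order.TTheory GRing.Theory Num.Theory.

(* Write [N = 2^M] and, for [y] in [C_M^dy], let [r_j = y_j + r_(j+1) / N] be the
   number whose base-[N] digits are [y_j, ..., y_(dy-1)]. The network keeps one
   coordinate per output; before stage [j], coordinate [j] holds [r_j] and
   coordinate [j+1] is free. Stage [j] builds in coordinate [j+1] the staircase
   [max (t/N - y_j) 0], t = 1, ..., N - 1, two layers per step: ramps of slope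
   [K = N^(dy-1-j)] resolve each step exactly because [r_j - y_j = r_(j+1) / N] is at
   most [(1 - 1/K) / N]. Two more layers then leave [y_j] in coordinate [j] and
   [r_(j+1)] in coordinate [j+1]. A final layer computes [min v 1], which keeps the
   range in [0, 1] for every input.
   The network thus inverts [encode] on all of [C_M^dy]; as [encode] maps onto
   [C_(dy M)], it agrees with [decode] there without any uniqueness argument. *)

Lemma sum_digits (N k m : nat) :
  \sum_(e < m) (k %/ N ^ e %% N) * N ^ e = k %% N ^ m.
Proof.
elim: m => [|m IHm]; first by rewrite big_ord0 expn0 modn1.
rewrite big_ord_recr /= IHm modn_divl -expnS.
rewrite [in RHS](divn_eq (k %% N ^ m.+1) (N ^ m)) addnC.
by rewrite (modn_dvdm _ (dvdn_exp2l N (leqnSn m))).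
Qed.

Lemma width_nseq (k d : nat) : width (nseq k.+1 d) = d.
Proof.
rewrite /width big_nseq; elim: k => [|k IHk]; first exact: maxn0.
by rewrite iterS IHk maxnn.
Qed.

Local Open Scope ring_scope.

Section ReluLayers.
Variables (R : realType) (d : nat).

Definition layer := ('M[R]_d * 'rV[R]_d)%type.

Definition relu_layer (L : layer) (v : 'rV[R]_d) : 'rV[R]_d :=
  relu_vec (v *m L.1 + L.2).

Definition run_layers (ls : seq layer) (v : 'rV[R]_d) : 'rV[R]_d :=
  foldl (fun v L => relu_layer L v) v ls.

Lemma run_layers_cat ls1 ls2 v :
  run_layers (ls1 ++ ls2) v = run_layers ls2 (run_layers ls1 v).
Proof. exact: foldl_cat. Qed.

Lemma relu_net_run_layers din dout hs (g : 'rV[R]_din -> 'rV[R]_d) ls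
    (A : 'M[R]_(d, dout)) b :
  relu_net din d hs g ->
  relu_net din dout (hs ++ nseq (size ls).+1 d)
    (fun x => run_layers ls (relu_vec (g x)) *m A + b).
Proof.
elim: ls hs g => [|L ls IHls] hs g net_g.
  by rewrite cats1; apply: relu_net_layer.
by rewrite /= -cat_rcons; apply: (IHls _ _ (relu_net_layer L.1 L.2 net_g)).
Qed.

Definition row_nonneg (v : 'rV[R]_d) := forall i, 0 <= v 0 i.

Lemma relu_vec_nonneg v : row_nonneg (relu_vec v).
Proof. by move=> i; rewrite mxE le_max lexx orbT. Qed.

Lemma run_layers_nonneg ls v : row_nonneg v -> row_nonneg (run_layers ls v).
Proof.
by elim: ls v => [//|L ls IHls] v _; apply: IHls; apply: relu_vec_nonneg.
Qed.

Definition row_set (v : 'rV[R]_d) (m : 'I_d) (x : R) : 'rV[R]_d :=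
  \row_i (if i == m then x else v 0 i).

Lemma row_set_set v m x x' : row_set (row_set v m x) m x' = row_set v m x'.
Proof. by apply/rowP => i; rewrite !mxE; case: eqP. Qed.

Lemma row_set_nonneg v m x : row_nonneg v -> 0 <= x -> row_nonneg (row_set v m x).
Proof. by move=> v_ge0 x_ge0 i; rewrite mxE; case: eqP. Qed.

Lemma row_mul_delta (v : 'rV[R]_d) p : \sum_k v 0 k * (k == p)%:R = v 0 p.
Proof.
rewrite (bigD1 p) //= eqxx mulr1 big1 ?addr0 // => k /negbTE ->.
exact: mulr0.
Qed.

Definition update_layer (m p q : 'I_d) (a b c : R) : layer :=
  (\matrix_(k, i) (if i == m then a * (k == p)%:R + b * (k == q)%:R
                   else (k == i)%:R),
   \row_i (if i == m then c else 0)).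

Lemma update_layerE m p q a b c v : row_nonneg v ->
  relu_layer (update_layer m p q a b c) v =
  row_set v m (Num.max (a * v 0 p + b * v 0 q + c) 0).
Proof.
move=> v_ge0; apply/rowP => i; rewrite !mxE.
under eq_bigr => k _ do rewrite mxE.
case: eqP => _; last by rewrite row_mul_delta addr0; apply: max_l.
rewrite -!row_mul_delta mulr_sumr mulr_sumr -big_split /=.
by congr (Num.max (_ + _) _); apply: eq_bigr => k _; ring.
Qed.

End ReluLayers.

(* One step of the staircase [t |-> max (t - q) 0], computed by two ReLUs that only
   see [q + s]. *)
Lemma relu_pair_step (R : realType) (K u w q s : R) :
  0 < w -> 0 <= s -> 1 <= K -> K * s <= (K - 1) * w -> u + w <= q \/ q <= u ->
  Num.max (K * (u + w)
           - Num.max (K * (u + w) - w - Num.max (u - q) 0 - K * (q + s)) 0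
           - K * (q + s)) 0
  = Num.max (u + w - q) 0.
Proof.
move=> w_gt0 s_ge0 K_ge1 Ks [above|below].
- have Kuw : K * (u + w) <= K * q by rewrite ler_wpM2l //; lra.
  have Ks_ge0 : 0 <= K * s by rewrite mulr_ge0 //; lra.
  rewrite (@max_r _ _ (u - q) 0); last lra.
  rewrite (@max_r _ _ (K * (u + w) - w - 0 - K * (q + s)) 0); last lra.
  by rewrite !max_r; lra.
- have Kuq : 0 <= (K - 1) * (u - q) by rewrite mulr_ge0 //; lra.
  rewrite (@max_l _ _ (u - q) 0); last lra.
  rewrite (@max_l _ _ (K * (u + w) - w - (u - q) - K * (q + s)) 0); last lra.
  by rewrite !max_l; lra.
Qed.

Section DigitStage.
Variables (R : realType) (d : nat) (p q : 'I_d) (K : R) (N : nat).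
Hypotheses (neq_pq : p != q) (N_gt0 : (0 < N)%N) (K_ge1 : 1 <= K).

Definition step_layer (beta : R) : layer R d := update_layer q p q (- K) (-1) beta.

Definition staircase (T : nat) : seq (layer R d) :=
  flatten [seq let u := t%:R / N%:R in let w := N%:R^-1 in
           [:: step_layer (K * (u + w) - w); step_layer (K * (u + w))] | t <- iota 0 T].

(* The staircase ends at [(N - 1 - a) / N] in [q]; from it and [p] the last two
   layers recover first [r] in [q], then [a / N] in [p]. *)
Definition digit_stage : seq (layer R d) :=
  staircase N.-1 ++ [:: update_layer q q p N%:R N%:R (1 - N%:R);
                        update_layer p p q 1 (- N%:R^-1) 0].

Lemma step_layerE beta v : row_nonneg v ->
  relu_layer (step_layer beta) v = row_set v q (Num.max (beta - v 0 q - K * v 0 p) 0).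
Proof.
by move=> v_ge0; rewrite update_layerE //; congr (row_set _ _ (Num.max _ _)); ring.
Qed.

Variables (a : nat) (r : R) (v : 'rV[R]_d).
Hypotheses (v_ge0 : row_nonneg v) (vq : v 0 q = 0) (vp : v 0 p = a%:R / N%:R + r / N%:R).
Hypotheses (r_ge0 : 0 <= r) (Kr : K * r <= K - 1).

Lemma staircaseE T :
  run_layers (staircase T) v = row_set v q (Num.max (T%:R / N%:R - a%:R / N%:R) 0).
Proof.
have N_gt0R : (0 : R) < N%:R by rewrite ltr0n.
elim: T => [|T IHT].
  rewrite /= mul0r sub0r max_r; first by apply/rowP => i; rewrite mxE; case: eqP => // ->.
  by rewrite oppr_le0 divr_ge0 ?ler0n.
rewrite /staircase -[T.+1]addn1 iotaD map_cat flatten_cat run_layers_cat -/(staircase T) IHT /=.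
set z := Num.max _ 0.
have z_ge0 : 0 <= z by rewrite le_max lexx orbT.
rewrite [relu_layer _ (row_set _ _ _)]step_layerE; last exact: row_set_nonneg.
rewrite step_layerE; last first.
  by apply: row_set_nonneg; [exact: row_set_nonneg | rewrite le_max lexx orbT].
rewrite !mxE !eqxx (negbTE neq_pq) row_set_set row_set_set vp add0n.
congr (row_set _ _ _); rewrite natrD mulrDl mul1r /z.
apply: relu_pair_step => //; first by rewrite invr_gt0.
- by rewrite divr_ge0 ?ler0n.
- by rewrite mulrA ler_wpM2r ?invr_ge0 ?ler0n.
- case: (ltnP T a) => [lt_Ta|le_aT]; [left|right].
    have -> : T%:R / N%:R + N%:R^-1 = T.+1%:R / N%:R :> R.
      by rewrite -natr1 mulrDl mul1r.
    by rewrite ler_wpM2r ?invr_ge0 ?ler0n // ler_nat.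
  by rewrite ler_wpM2r ?invr_ge0 ?ler0n // ler_nat.
Qed.

Lemma digit_stageE : (a < N)%N ->
  run_layers digit_stage v = row_set (row_set v q r) p (a%:R / N%:R).
Proof.
move=> a_lt_N; have N_gt0R : (0 : R) < N%:R by rewrite ltr0n.
have N_neq0 : N%:R != 0 :> R by rewrite lt0r_neq0.
rewrite run_layers_cat staircaseE /=.
have a_le : a%:R <= N%:R - 1 :> R.
  by move: a_lt_N; rewrite -(ler_nat R) -natr1; lra.
have -> : Num.max (N.-1%:R / N%:R - a%:R / N%:R) 0 = (N%:R - 1 - a%:R) / N%:R :> R.
  rewrite -subn1 natrB // -mulrBl max_l //.
  by rewrite divr_ge0 ?subr_ge0.
rewrite [relu_layer _ (row_set _ _ _)]update_layerE; last first.
  by apply: row_set_nonneg; rewrite // divr_ge0 ?subr_ge0.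
rewrite !mxE eqxx (negbTE neq_pq) vp.
have -> : N%:R * ((N%:R - 1 - a%:R) / N%:R) + N%:R * (a%:R / N%:R + r / N%:R)
          + (1 - N%:R) = r by field.
rewrite (max_l r_ge0) row_set_set update_layerE; last exact: row_set_nonneg.
rewrite !mxE eqxx (negbTE neq_pq) vp.
have -> : 1 * (a%:R / N%:R + r / N%:R) + - N%:R^-1 * r + 0 = a%:R / N%:R by field.
by rewrite max_l // divr_ge0 ?ler0n.
Qed.

End DigitStage.

Lemma eq_inord n (i : 'I_n.+1) j : (j <= n)%N -> (i == inord j) = (i == j :> nat).
Proof. by move=> le_jn; rewrite -val_eqE /= inordK. Qed.

Section Decoder.
Variables (R : realType) (n M : nat).
Local Notation N := (2 ^ M)%N.

Lemma base_gt0 : (0 < N)%N. Proof. by rewrite expn_gt0. Qed.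

Definition digit_layers (J : nat) : seq (layer R n.+1) :=
  flatten [seq digit_stage (inord j) (inord j.+1) (N%:R ^+ (n - j)) N | j <- iota 0 J].

(* Together with the final affine map [v |-> 1 - v] this clamps at [1]. *)
Definition clamp_layer : layer R n.+1 := (- 1%:M, const_mx 1).

Definition decoder (x : 'rV[R]_1) : 'rV[R]_n.+1 :=
  run_layers (digit_layers n ++ [:: clamp_layer]) (relu_vec (x *m delta_mx 0 0 + 0))
  *m - 1%:M + const_mx 1.

Lemma decoder_relu_net :
  relu_net 1 n.+1 (nseq (size (digit_layers n ++ [:: clamp_layer])).+1 n.+1) decoder.
Proof. exact: (relu_net_run_layers _ _ _ (relu_net_affine _ _)). Qed.

Lemma decoderE x i : decoder x 0 i =
  1 - Num.max (1 - run_layers (digit_layers n) (relu_vec (x *m delta_mx 0 0 + 0)) 0 i) 0.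
Proof.
rewrite /decoder run_layers_cat /= /relu_layer /= !mulmxN !mulmx1 !mxE.
by rewrite addrC (addrC (- _)).
Qed.

Lemma decoder_range x i : 0 <= decoder x 0 i <= 1.
Proof.
rewrite decoderE; set u := run_layers _ _ 0 i.
have u_ge0 : 0 <= u by apply: run_layers_nonneg; apply: relu_vec_nonneg.
by case: (leP (1 - u) 0) => h; apply/andP; split; lra.
Qed.

Variables (y : 'rV[R]_n.+1).
Hypothesis y_in : in_Cvec M y.

Lemma coord_digit i : exists2 a, (a < N)%N & y 0 i = a%:R / N%:R.
Proof. by have [a [a_lt ->]] := y_in i; exists a; rewrite // natrX. Qed.

Lemma coord_bounds i : 0 <= y 0 i <= 1 - N%:R^-1.
Proof.
have [a a_lt ->] := coord_digit i; have N_gt0R : (0 : R) < N%:R by rewrite ltr0n base_gt0.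
rewrite divr_ge0 ?ler0n //= ler_pdivrMr // mulrBl mul1r mulVf ?lt0r_neq0 //.
by rewrite lerBrDr natr1 ler_nat.
Qed.

Definition residual (J : nat) : R :=
  \sum_(J <= i < n.+1) y 0 (inord i) / N%:R ^+ (i - J).

Definition digit_state (J : nat) : 'rV[R]_n.+1 :=
  \row_i (if (i < J)%N then y 0 i else if i == J :> nat then residual J else 0).

Lemma residualS J : (J <= n)%N -> residual J = y 0 (inord J) + residual J.+1 / N%:R.
Proof.
move=> le_Jn; rewrite /residual big_ltn ?ltnS // subnn expr0 divr1 mulr_suml.
congr (_ + _); apply: eq_big_nat => i /andP [lt_Ji _].
by rewrite -mulrA -invfM -exprSr subnSK.
Qed.

Lemma residual_ge0 J : 0 <= residual J.
Proof.
apply: sumr_ge0 => i _; rewrite divr_ge0 ?exprn_ge0 ?ler0n //.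
by have /andP [] := coord_bounds (inord i).
Qed.

Lemma residual_le k : (k <= n.+1)%N -> residual (n.+1 - k) <= 1 - (N%:R ^+ k)^-1.
Proof.
elim: k => [|k IHk] le_k; first by rewrite subn0 /residual big_geq // expr0 invr1 subrr.
rewrite residualS ?subSS ?leq_subr // -subSn // exprSr invfM.
have := IHk (ltnW le_k); set e := (N%:R ^+ k)^-1; move=> res_le.
have : residual (n.+1 - k) / N%:R <= N%:R^-1 - e * N%:R^-1.
  by rewrite -[X in X - _]mul1r -mulrBl ler_wpM2r ?invr_ge0 ?ler0n.
by have /andP [_] := coord_bounds (inord (n - k)); lra.
Qed.

Lemma digit_state_nonneg J : row_nonneg (digit_state J).
Proof.
move=> i; rewrite mxE; case: ifP => _; first by have /andP [] := coord_bounds i.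
by case: ifP => _; [exact: residual_ge0 | exact: lexx].
Qed.

Lemma digit_state_step J : (J < n)%N ->
  run_layers (digit_stage (inord J) (inord J.+1) (N%:R ^+ (n - J)) N) (digit_state J)
  = digit_state J.+1.
Proof.
move=> lt_Jn; have le_Jn := ltnW lt_Jn; have [a a_lt ya] := coord_digit (inord J).
have N_gt0R : (0 : R) < N%:R by rewrite ltr0n base_gt0.
have K_gt0 : (0 : R) < N%:R ^+ (n - J) by rewrite exprn_gt0.
have r_le : residual J.+1 <= 1 - (N%:R ^+ (n - J))^-1.
  have le_nJ : (n - J <= n.+1)%N by lia.
  by have := residual_le le_nJ; rewrite (_ : n.+1 - (n - J) = J.+1)%N //; lia.
rewrite (digit_stageE _ _ _ (a := a) (r := residual J.+1)) //.
- apply/rowP => i; rewrite !mxE !eq_inord //.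
  case: (ltngtP i J) => [lt_iJ | lt_Ji | eq_iJ].
  + have -> : (i < J.+1)%N by lia.
    by rewrite ifF //; lia.
  + by have -> : (i < J.+1)%N = false by lia.
  + have -> : i = inord J by apply: val_inj; rewrite /= inordK.
    by rewrite inordK // ltnSn ya.
- by rewrite eq_inord // inordK; lia.
- exact: base_gt0.
- by rewrite exprn_ege1 // ler1n base_gt0.
- exact: digit_state_nonneg.
- by rewrite mxE inordK // !ifF //; lia.
- by rewrite mxE inordK // ltnn eqxx residualS // ya.
- exact: residual_ge0.
- apply: (le_trans (ler_wpM2l (ltW K_gt0) r_le)).
  by rewrite mulrBr mulr1 mulfV // lt0r_neq0.
Qed.

Lemma digit_layersE J : (J <= n)%N ->
  run_layers (digit_layers J) (digit_state 0) = digit_state J.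
Proof.
elim: J => [//|J IHJ] lt_Jn.
rewrite /digit_layers -[J.+1]addn1 iotaD map_cat flatten_cat /= cats0 run_layers_cat.
by rewrite -/(digit_layers J) add0n addn1 (IHJ (ltnW lt_Jn)) digit_state_step.
Qed.

Lemma digit_state_last : digit_state n = y.
Proof.
apply/rowP => i; rewrite mxE; case: ltnP => [//|le_ni].
have i_n : i = inord n by apply: val_inj; rewrite /= inordK //; have := ltn_ord i; lia.
by rewrite i_n inordK // eqxx residualS // /residual big_geq // mul0r addr0.
Qed.

Lemma decoder_input : relu_vec ((\row_(_ < 1) encode_sum M y) *m delta_mx 0 0 + 0)
  = digit_state 0.
Proof.
have enc : residual 0 = encode_sum M y.
  rewrite /residual /encode_sum big_mkord; apply: eq_bigr => i _.
  by rewrite inord_val subn0 natrX -exprM mulnC.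
apply/rowP => i; rewrite !mxE big_ord1 !mxE addr0 /= enc.
rewrite -val_eqE /=; case: eqP => _; last by rewrite mulr0 maxxx.
by rewrite mulr1 max_l // -enc residual_ge0.
Qed.

Lemma decoder_encode : decoder (\row_(_ < 1) encode_sum M y) = y.
Proof.
apply/rowP => i; rewrite decoderE decoder_input digit_layersE // digit_state_last.
have /andP [y_ge0 y_le] := coord_bounds i.
have N_inv_ge0 : 0 <= N%:R^-1 :> R by rewrite invr_ge0 ler0n.
by rewrite max_l; [ring | lra].
Qed.

End Decoder.

Lemma encode_sum_onto (R : realType) (n M : nat) (c : R) :
  Cn (n.+1 * M) c -> exists y : 'rV[R]_n.+1, in_Cvec M y /\ encode_sum M y = c.
Proof.
move=> [k [k_lt ->]]; set N := (2 ^ M)%N.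
have N_gt0 : (0 < N)%N by rewrite expn_gt0.
have N_neq0 : N%:R != 0 :> R by rewrite pnatr_eq0 -lt0n.
have pow2 j : (2 : R) ^+ (j * M) = N%:R ^+ j by rewrite natrX -exprM mulnC.
pose digit i := (k %/ N ^ (n - i) %% N)%N.
have k_digits : k = (\sum_(i < n.+1) digit i * N ^ (n - i))%N.
  have k_lt' : (k < N ^ n.+1)%N by rewrite -expnM mulnC.
  rewrite -[LHS](modn_small k_lt') -sum_digits (reindex_inj rev_ord_inj) /=.
  by apply: eq_bigr => i _; rewrite subSS.
exists (\row_(i < n.+1) ((digit i)%:R / N%:R)); split.
  by move=> i; exists (digit i); rewrite ltn_pmod // mxE natrX.
rewrite /encode_sum pow2 k_digits natr_sum mulr_suml; apply: eq_bigr => i _.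
have le_in : (i <= n)%N by rewrite -ltnS.
have -> : N%:R ^+ n.+1 = N%:R ^+ (n - i) * N%:R ^+ i * N%:R :> R.
  by rewrite -exprD subnK // -exprSr.
by rewrite mxE pow2 natrM natrX; field; rewrite N_neq0 !expf_neq0.
Qed.

Theorem lemma6 (R : realType) (dy M : nat) (delta : R) :
  (0 < dy)%N -> (0 < M)%N -> 0 < delta ->
  exists (hs : seq nat) (f : 'rV[R]_1 -> 'rV[R]_dy),
    [/\ relu_net 1 dy hs f,
        width hs = dy,
        (forall c : R, Cn (dy * M) c -> f (\row_(_ < 1) c) = decode dy M c) &
        (forall (x : R) (i : 'I_dy),
            0 <= f (\row_(_ < 1) x) 0 i /\ f (\row_(_ < 1) x) 0 i <= 1)].
Proof.
case: dy => [//|n] _ _ _.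
exists (nseq (size (@digit_layers R n M n ++ [:: @clamp_layer R n])).+1 n.+1).
exists (@decoder R n M); split.
- exact: decoder_relu_net.
- exact: width_nseq.
- move=> c /encode_sum_onto /(xgetPex 0) [].
  rewrite -/(decode n.+1 M c) => dec_in dec_enc.
  by rewrite -{1}dec_enc decoder_encode.
- by move=> x i; apply/andP; apply: decoder_range.
Qed.
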